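(* Let $L$ be an $R_0$-algebra and $k\in[0,1)$. Let $\{F_t\mid t\in\Lambda\}$, where $\Lambda\subseteq(0,\tfrac{1-k}{2}]$, be a collection of fated filters of $L$ such that (i) $L=\bigcup_{t\in\Lambda}F_t$, and (ii) for all $s,t\in\Lambda$, $s<t$ if and only if $F_t\subset F_s$. Then the fuzzy subset $\mu$ of $L$ defined by $\mu(x)=\sup\{t\in\Lambda\mid x\in F_t\}$ for all $x\in L$ is an $(\in,\in\vee q_k)$-fuzzy fated filter of $L$.
   Context: An $R_0$-algebra is a bounded distributive lattice $(L,\wedge,\vee,0,1)$ with an order-reversing involution $\neg$ and a binary operation $\to$ such that for all $x,y,z\in L$: $x\to y=\neg y\to\neg x$; $1\to x=x$; $(y\to z)\wedge((x\to y)\to(x\to z))=y\to z$; $x\to(y\to z)=y\to(x\to z)$; $x\to(y\vee z)=(x\to y)\vee(x\to z)$; $(x\to y)\vee((x\to y)\to(\neg x\vee y))=1$. A fated filter of $L$ is a nonempty subset $A\subseteq L$ with $1\in A$ such that for all $x,y\in L$ and $a\in A$, $a\to((x\to y)\to x)\in A$ implies $x\in A$. For $x\in L$, $t\in(0,1]$ and a fuzzy subset $\mu:L\to[0,1]$: $x_t\in\mu$ iff $\mu(x)\ge t$; $x_t\,q_k\,\mu$ iff $\mu(x)+t+k>1$; $x_t\in\vee q_k\,\mu$ iff $x_t\in\mu$ or $x_t\,q_k\,\mu$. $\mu$ is an $(\in,\in\vee q_k)$-fuzzy fated filter of $L$ if (1) for all $x\in L$, $t\in(0,1]$: $x_t\in\mu\Rightarrow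 1_t\in\vee q_k\,\mu$; and (2) for all $x,a,y\in L$, $t,s\in(0,1]$: if $(a\to((x\to y)\to x))_t\in\mu$ and $a_s\in\mu$ then $x_{\min\{t,s\}}\in\vee q_k\,\mu$. *)

From mathcomp Require Import all_boot all_order all_algebra.
From mathcomp Require Import boolp classical_sets reals.

Set Implicit Arguments.
Unset Strict Implicit.
Unset Printing Implicit Defensive.

Import Order.TTheory GRing.Theory Num.Theory.
Local Open Scope ring_scope.

(* The lattice order is x <= y :<-> meet x y = x. *)
Record R0_algebra (L : Type) := R0Alg {
  meet : L -> L -> L;
  join : L -> L -> L;
  bot : L;
  top : L;
  neg : L -> L;
  imp : L -> L -> L;
  meetC : forall x y, meet x y = meet y x;
  joinC : forall x y, join x y = join y x;
  meetA : forall x y z, meet x (meet y z) = meet (meet x y) z;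
  joinA : forall x y z, join x (join y z) = join (join x y) z;
  meetKj : forall x y, meet x (join x y) = x;
  joinKm : forall x y, join x (meet x y) = x;
  meetDj : forall x y z, meet x (join y z) = join (meet x y) (meet x z);
  meet_bot : forall x, meet bot x = bot;
  meet_top : forall x, meet top x = x;
  negK : forall x, neg (neg x) = x;
  neg_rev : forall x y, meet x y = x -> meet (neg y) (neg x) = neg y;
  r0_contra : forall x y, imp x y = imp (neg y) (neg x);
  r0_top : forall x, imp top x = x;
  r0_3 : forall x y z, meet (imp y z) (imp (imp x y) (imp x z)) = imp y z;
  r0_exch : forall x y z, imp x (imp y z) = imp y (imp x z);
  r0_join : forall x y z, imp x (join y z) = join (imp x y) (imp x z);
  r0_6 : forall x y, join (imp x y) (imp (imp x y) (join (neg x) y)) = top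
}.

Definition fated_filter (L : Type) (A : R0_algebra L) (F : L -> Prop) : Prop :=
  (exists x, F x) /\ F (top A) /\
  forall x y a, F a -> F (imp A a (imp A (imp A x y) x)) -> F x.

Section Fuzzy.
Variable R : realType.

Definition fin (L : Type) (mu : L -> R) (x : L) (t : R) : Prop := t <= mu x.
Definition fq (k : R) (L : Type) (mu : L -> R) (x : L) (t : R) : Prop :=
  mu x + t + k > 1.
Definition finq (k : R) (L : Type) (mu : L -> R) (x : L) (t : R) : Prop :=
  fin mu x t \/ fq k mu x t.

Definition in_inq_fuzzy_fated_filter (k : R) (L : Type) (A : R0_algebra L)
    (mu : L -> R) : Prop :=
  (forall x, 0 <= mu x <= 1) /\
  (forall x t, 0 < t <= 1 -> fin mu x t -> finq k mu (top A) t) /\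
  (forall x a y t s, 0 < t <= 1 -> 0 < s <= 1 ->
     fin mu (imp A a (imp A (imp A x y) x)) t -> fin mu a s ->
     finq k mu x (Num.min t s)).
End Fuzzy.

From mathcomp Require Import all_boot all_order all_algebra.
From mathcomp Require Import boolp classical_sets reals.
From mathcomp Require Import lra.
Set Implicit Arguments.
Unset Strict Implicit.
Unset Printing Implicit Defensive.

Import Order.TTheory GRing.Theory Num.Theory.
Local Open Scope ring_scope.
Local Open Scope classical_set_scope.

(* The level sets [F t] form a chain which shrinks as [t] grows, so if [a] is
   in [F u] and [b] in [F v], both lie in [F (min u v)].  Hence if every [F t]
   passes from [a] and [b] to [x], then [min (mu a) (mu b) <= mu x].  The
   fated-filter rule of each [F t] thus yields the fuzzy rule with [x_(min t s)]
   even in [mu], and [1 \in F t] for all [t] makes [mu 1] maximal.  The bound [t <= (1 - k) / 2 <= 1] only serves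
   to keep the values of [mu] in [0, 1]. *)

Section LevelSup.
Variables (R : realType) (T : Type) (Lam : set R) (F : R -> T -> Prop).
Hypothesis Lam_ubound : has_ubound Lam.
Hypothesis levels_cover : forall x, exists2 t, Lam t & F t x.
Hypothesis levels_antitone :
  forall s t, Lam s -> Lam t -> s < t -> forall x, F t x -> F s x.

Let mu x := sup [set t | Lam t /\ F t x].

Lemma level_has_sup x : has_sup [set t | Lam t /\ F t x].
Proof.
split; first by have [t Lt Ft] := levels_cover x; exists t.
by apply: subset_has_ubound Lam_ubound => t [].
Qed.

Lemma le_level_sup x t : Lam t -> F t x -> t <= mu x.
Proof. by move=> Lt Ft; apply: sup_upper_bound (level_has_sup x) _ _. Qed.

Lemma level_sup_le x c : (forall t, Lam t -> t <= c) -> mu x <= c.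
Proof. by move=> Lc; apply: ge_sup (level_has_sup x).1 _ => t [/Lc]. Qed.

Lemma levels_le_antitone s t x : Lam s -> Lam t -> s <= t -> F t x -> F s x.
Proof.
move=> Ls Lt; rewrite le_eqVlt => /orP[/eqP -> //|lt_st].
exact: levels_antitone lt_st x.
Qed.

Lemma min_level_sup_le a b x :
  (forall w, Lam w -> F w a -> F w b -> F w x) ->
  Num.min (mu a) (mu b) <= mu x.
Proof.
move=> Fab_x; rewrite leNgt; apply/negP; rewrite lt_min => /andP[ltxa ltxb].
have [u [Lu Fua] ltxu] := sup_gt (level_has_sup a).1 ltxa.
have [v [Lv Fvb] ltxv] := sup_gt (level_has_sup b).1 ltxb.
have [w [Lw Fwa Fwb ltxw]] :
    exists w, [/\ Lam w, F w a, F w b & mu x < w].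
  case: (leP u v) => [le_uv|lt_vu].
  - by exists u; split=> //; apply: levels_le_antitone le_uv Fvb.
  - by exists v; split=> //; apply: levels_le_antitone (ltW lt_vu) Fua.
by move: (le_level_sup Lw (Fab_x w Lw Fwa Fwb)); rewrite leNgt ltxw.
Qed.

Lemma le_level_sup_mono x y :
  (forall w, Lam w -> F w x -> F w y) -> mu x <= mu y.
Proof.
by move=> Fxy; rewrite -[mu x]minxx; apply: min_level_sup_le => w Lw Fx _; auto.
Qed.

End LevelSup.

Theorem theorem3p28 (R : realType) (L : Type) (A : R0_algebra L) (k : R)
  (Lam : set R) (F : R -> L -> Prop) :
  0 <= k < 1 ->
  (forall t, Lam t -> 0 < t <= (1 - k) / 2) ->
  (forall t, Lam t -> fated_filter A (F t)) ->
  (forall x : L, exists2 t, Lam t & F t x) ->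
  (forall s t, Lam s -> Lam t ->
     (s < t <-> ((forall x, F t x -> F s x) /\ exists x, F s x /\ ~ F t x))) ->
  in_inq_fuzzy_fated_filter k A
    (fun x => sup [set t | Lam t /\ F t x]).
Proof.
move=> /andP[k_ge0 k_lt1] Lam_range Ffated cover Ford.
have Lam_le1 t : Lam t -> t <= 1.
  move=> /Lam_range /andP[_ le_t_half]; apply: le_trans le_t_half _.
  by rewrite ler_pdivrMr //; lra.
have Lam_ubound : has_ubound Lam by exists 1 => t /Lam_le1.
have antitone s t : Lam s -> Lam t -> s < t -> forall x, F t x -> F s x.
  by move=> Ls Lt /(Ford s t Ls Lt) [].
split; [|split].
- move=> x; have [t Lt Ftx] := cover x.
  have t_gt0 := (andP (Lam_range t Lt)).1.
  have le_t_mux := le_level_sup Lam_ubound cover Lt Ftx.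
  by rewrite (le_trans (ltW t_gt0) le_t_mux) (level_sup_le Lam_ubound cover).
- move=> x t _ le_t_mux; left; rewrite /fin /= in le_t_mux *.
  apply: le_trans le_t_mux _.
  have F_top w : Lam w -> F w x -> F w (top A) by move=> /Ffated [_ []].
  exact: (le_level_sup_mono Lam_ubound cover antitone F_top).
- move=> x a y t s _ _ le_t_mub le_s_mua; left; rewrite /fin in le_t_mub le_s_mua *.
  set b := imp A a _ in le_t_mub.
  have Fba_x w : Lam w -> F w b -> F w a -> F w x.
    by move=> /Ffated [_ [_ fated]] Fb Fa; apply: fated Fa Fb.
  apply: le_trans (min_level_sup_le Lam_ubound cover antitone Fba_x).
  by rewrite le_min !ge_min le_t_mub le_s_mua orbT.
Qed.
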